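(* For every positive integer $n$, $$\overline{\mathrm{spt}}_{\omega}(n)\equiv\overline{\mathrm{spt}}(n)\equiv\begin{cases}1\pmod 2 & \text{if } n=k^2 \text{ or } n=2k^2 \text{ for some integer } k,\\ 0\pmod 2&\text{otherwise.}\end{cases}$$
   Context: $(a;q)_n=\prod_{j=0}^{n-1}(1-aq^j)$, $(a;q)_\infty=\prod_{j\ge0}(1-aq^j)$. $\overline{\mathrm{spt}}(n)$ is defined by $\sum_{n\ge1}\overline{\mathrm{spt}}(n)q^n=\sum_{n\ge1}\frac{q^n(-q^{n+1};q)_\infty}{(1-q^n)^2(q^{n+1};q)_\infty}$ (the number of smallest parts in overpartitions of $n$ whose smallest part is overlined). $\overline{\mathrm{spt}}_{\omega}(n)$ is defined by $\sum_{n\ge1}\overline{\mathrm{spt}}_{\omega}(n)q^n=\sum_{n\ge1}\frac{q^{n}(-q^{n+1};q)_{n}(-q^{2n+2};q^2)_{\infty}}{(1-q^n)^2(q^{n+1};q)_n(q^{2n+2};q^2)_{\infty}}$ (the number of smallest parts in overpartitions of $n$ with smallest part overlined and all odd parts less than twice the smallest part). *)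

From mathcomp Require Import all_boot.
Set Implicit Arguments. Unset Strict Implicit. Unset Printing Implicit Defensive.

(* Formal power series in q with natural-number coefficients, represented by
   their coefficient sequence: f n = coefficient of q^n. *)
Definition series := nat -> nat.

Definition sone : series := fun n => if n == 0 then 1 else 0.

Definition sshift (m : nat) (f : series) : series :=
  fun n => if m <= n then f (n - m) else 0.

Definition smul1p (k : nat) (f : series) : series := fun n => f n + sshift k f n.

(* multiplication by 1/(1 - q^k) = sum_{j>=0} q^(j k), for k >= 1 *)
Definition sdiv1m (k : nat) (f : series) : series :=
  fun n => \sum_(0 <= j < (n %/ k).+1) f (n - j * k).

Definition sratio (k : nat) (f : series) : series := sdiv1m k (smul1p k f).

Definition sratios (s : seq nat) (f : series) : series := foldr sratio f s.

(* Truncation of the generating function of spt-bar that is exact up to q^N: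
   sum_{m=1}^{N} q^m / (1-q^m)^2 * prod_{j=m+1}^{N} (1+q^j)/(1-q^j).
   (Terms with m > N and factors with j > N do not affect coefficients of
   q^i, i <= N.) *)
Definition sptbar_series (N : nat) : series :=
  fun i => \sum_(1 <= m < N.+1)
    sshift m (sdiv1m m (sdiv1m m (sratios (iota m.+1 (N - m)) sone))) i.

Definition sptbar (n : nat) : nat := sptbar_series n n.

(* Truncation, exact up to q^N, of
   sum_{m>=1} q^m (-q^{m+1};q)_m (-q^{2m+2};q^2)_oo
                / ((1-q^m)^2 (q^{m+1};q)_m (q^{2m+2};q^2)_oo)
   = sum_{m>=1} q^m/(1-q^m)^2 * prod_{j=m+1}^{2m} (1+q^j)/(1-q^j)
                * prod_{j>=m+1} (1+q^{2j})/(1-q^{2j}),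
   the last product truncated to 2j <= N. *)
Definition sptbarw_series (N : nat) : series :=
  fun i => \sum_(1 <= m < N.+1)
    sshift m (sdiv1m m (sdiv1m m
      (sratios (iota m.+1 m)
        (sratios [seq 2 * j | j <- iota m.+1 (N./2 - m)] sone)))) i.

Definition sptbarw (n : nat) : nat := sptbarw_series n n.

(** Modulo 2 every factor (1 + q^k)/(1 - q^k) is 1, so both generating
    functions reduce to sum_m q^m/(1 - q^m)^2, whose coefficient of q^n is
    sum_{m | n} n/m.  Its parity counts the divisors m of n = 2^a o (o odd)
    with n/m odd, i.e. m = 2^a e with e | o.  The involution
    2^a e |-> 2^a (o/e) pairs these off except at e^2 = o, so the count is
    odd exactly when o is a square, i.e. when n is a square or twice one. *)

From mathcomp Require Import all_boot.
Set Implicit Arguments. Unset Strict Implicit. Unset Printing Implicit Defensive.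

Definition eqmod2 (f g : series) := forall i, f i = g i %[mod 2].

Lemma eqmod2_trans f g h : eqmod2 f g -> eqmod2 g h -> eqmod2 f h.
Proof. by move=> fg gh i; rewrite fg gh. Qed.

Lemma sshift_eqmod2 k f g : eqmod2 f g -> eqmod2 (sshift k f) (sshift k g).
Proof. by move=> fg i; rewrite /sshift; case: ifP. Qed.

Lemma sdiv1m_eqmod2 k f g : eqmod2 f g -> eqmod2 (sdiv1m k f) (sdiv1m k g).
Proof.
move=> fg i; rewrite /sdiv1m -modn_summ -[RHS]modn_summ.
by congr (_ %% _); apply: eq_bigr => j _; apply: fg.
Qed.

Lemma sdiv1m_recl k f i : 0 < k -> k <= i ->
  sdiv1m k f i = f i + sdiv1m k f (i - k).
Proof.
move=> k0 ki; rewrite /sdiv1m big_nat_recl // mul0n subn0; congr (_ + _).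
have -> : (i - k) %/ k = (i %/ k).-1.
  by rewrite -{1}(mul1n k) divnBMl subn1.
rewrite prednK ?divn_gt0 //; apply: eq_big_nat => j /andP[_ jk].
have jki : j.+1 * k <= i by rewrite (leq_trans _ (leq_divM i k)) // leq_mul2r jk orbT.
by rewrite mulSnr addnC subnDA in jki *.
Qed.

Lemma sdiv1m_small k f i : i < k -> sdiv1m k f i = f i.
Proof. by move=> ik; rewrite /sdiv1m divn_small // big_nat1 mul0n subn0. Qed.

(* sratio k f i = f i + f (i - k) + sratio k f (i - k), and by induction the
   last term is f (i - k) mod 2. *)
Lemma sratio_eqmod2 k f : 0 < k -> eqmod2 (sratio k f) f.
Proof.
move=> k0 i; elim/ltn_ind: i => i IH; rewrite /sratio.
have [ki | ik] := leqP k i; last first.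
  by rewrite sdiv1m_small // /smul1p /sshift leqNgt ik addn0.
have IHk : sratio k f (i - k) = f (i - k) %[mod 2]
  by apply: IH; rewrite ltn_subrL k0 (leq_trans k0 ki).
rewrite sdiv1m_recl // -modnDmr IHk modnDmr.
by rewrite /smul1p /sshift ki -addnA addnn -muln2 -modnDmr modnMl addn0.
Qed.

Lemma sratios_eqmod2 s f : all (leq 1) s -> eqmod2 (sratios s f) f.
Proof.
elim: s => [|k s IH] //= /andP[k0 s0].
exact: eqmod2_trans (sratio_eqmod2 _ k0) (IH s0).
Qed.

Lemma sdiv1m_sone m i : 0 < m -> sdiv1m m sone i = (m %| i).
Proof.
move=> m0; elim/ltn_ind: i => i IH; have [mi | im] := leqP m i.
  rewrite sdiv1m_recl // IH ?ltn_subrL ?m0 ?(leq_trans m0 mi) // dvdn_subl //.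
  by rewrite /sone; case: i mi {IH} => //; rewrite leqNgt m0.
by rewrite sdiv1m_small // /sone; case: i im {IH} => [|i] im; rewrite ?dvdn0 ?gtnNdvd.
Qed.

Lemma sdiv1m2_sone m i : 0 < m -> sdiv1m m (sdiv1m m sone) i = (m %| i) * (i %/ m).+1.
Proof.
move=> m0; rewrite /sdiv1m (eq_big_nat _ _ (F2 := fun=> nat_of_bool (m %| i))).
  by rewrite sum_nat_const_nat subn0 mulnC.
move=> j /andP[_ jm]; rewrite -/(sdiv1m m sone _) sdiv1m_sone // dvdn_subl //.
  by rewrite (leq_trans _ (leq_divM i m)) // leq_mul2r -ltnS jm orbT.
by rewrite dvdn_mull.
Qed.

Lemma sshift_sdiv1m2_sone m i : 0 < m ->
  sshift m (sdiv1m m (sdiv1m m sone)) i = (m %| i) * (i %/ m).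
Proof.
move=> m0; rewrite /sshift; have [mi | im] := leqP m i; last first.
  by rewrite divn_small ?muln0.
rewrite sdiv1m2_sone // dvdn_subl //.
have -> : (i - m) %/ m = (i %/ m).-1 by rewrite -{1}(mul1n m) divnBMl subn1.
by rewrite prednK // divn_gt0.
Qed.

Definition odd_cofactor_divisors n : {set 'I_n.+1} :=
  [set m : 'I_n.+1 | (0 < m) && (m %| n) && odd (n %/ m)].

Lemma card_odd_cofactor_divisors n :
  #|odd_cofactor_divisors n| = \sum_(1 <= m < n.+1) ((m %| n) && odd (n %/ m)).
Proof.
rewrite -sum1dep_card big_mkcond /= -(big_mkord xpredT (fun m =>
  nat_of_bool ((0 < m) && (m %| n) && odd (n %/ m)))) big_nat_recl //= big_add1.
by apply: eq_bigr => m _; case: (_ && _).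
Qed.

Lemma sum_sshift_eqmod2 n (F : nat -> series) :
    (forall m, 0 < m -> eqmod2 (F m) (sdiv1m m (sdiv1m m sone))) ->
  \sum_(1 <= m < n.+1) sshift m (F m) n = #|odd_cofactor_divisors n| %[mod 2].
Proof.
move=> FE; rewrite card_odd_cofactor_divisors -modn_summ -[RHS]modn_summ.
congr (_ %% _); apply: eq_big_nat => m /andP[m0 _].
rewrite (sshift_eqmod2 m (FE m m0)) sshift_sdiv1m2_sone // !modn2 oddM.
by case: (m %| n); case: (odd (n %/ m)).
Qed.

Lemma all_iota_pos a l : all (leq 1) (iota a.+1 l).
Proof. by apply/allP => k; rewrite mem_iota => /andP[/(leq_trans (ltn0Sn a))]. Qed.

Lemma sptbar_eqmod2 n : sptbar n = #|odd_cofactor_divisors n| %[mod 2].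
Proof.
apply: sum_sshift_eqmod2 => m _.
by do 2!apply: sdiv1m_eqmod2; apply: sratios_eqmod2; apply: all_iota_pos.
Qed.

Lemma sptbarw_eqmod2 n : sptbarw n = #|odd_cofactor_divisors n| %[mod 2].
Proof.
apply: sum_sshift_eqmod2 => m _; do 2!apply: sdiv1m_eqmod2.
apply: eqmod2_trans (sratios_eqmod2 _ (all_iota_pos _ _)) _.
apply: sratios_eqmod2; rewrite all_map; apply/allP => j; rewrite mem_iota /=.
by case/andP=> /(leq_trans (ltn0Sn m)) j0 _; rewrite muln_gt0 j0.
Qed.

Lemma odd_card_involution (T : finType) (f : T -> T) (A : {set T}) :
    {in A, forall x, f x \in A} -> {in A, cancel f f} ->
  odd #|A| = odd #|[set x in A | f x == x]|.
Proof.
have [k] := ubnP #|A|; elim: k A => // k IH A Ak fA ffA.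
have [x /andP[xA fxx] | Afix] := pickP [pred x in A | f x != x]; last first.
  congr odd; apply: eq_card => x; rewrite inE.
  have := Afix x; rewrite /= andbC.
  by case: (x \in A); rewrite ?andbF ?andbT // => /negbFE.
have fxA : f x \in A :\ x by rewrite !inE fxx fA.
set B := A :\ x :\ f x.
have fB : {in B, forall y, f y \in B}.
  move=> y; rewrite !inE => /and3P[yfx yx yA]; rewrite fA // andbT.
  apply/andP; split.
    by apply: contra yx => /eqP/(congr1 f); rewrite !ffA // => ->.
  by apply: contra yfx => /eqP <-; rewrite ffA.
have cardA : #|A| = #|B|.+2.
  by rewrite (cardsD1 x A) xA (cardsD1 (f x) (A :\ x)) fxA.
have -> : [set y in A | f y == y] = [set y in B | f y == y].
  apply/setP => y; rewrite !inE.
  case: (eqVneq y x) => [-> | _]; first by rewrite (negbTE fxx) !andbF.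
  case: (eqVneq y (f x)) => [-> | _] //=.
  by rewrite ffA // eq_sym (negbTE fxx) andbF.
rewrite cardA /= negbK; apply: IH => //; first by move: Ak; rewrite cardA ltnS => /ltnW.
by move=> y /[dup] /fB yB; rewrite !inE => /and3P[_ _ /ffA].
Qed.

Section TwoAdic.

Variables (a o : nat).
Hypothesis o_odd : odd o.

Let o_gt0 : 0 < o. Proof. by case: o o_odd. Qed.

Lemma odd_cofactor_dvdP m :
  reflect (exists2 e, e %| o & m = 2 ^ a * e)
          ((0 < m) && (m %| 2 ^ a * o) && odd (2 ^ a * o %/ m)).
Proof.
apply: (iffP idP) => [/andP[/andP[m0 mn] q_odd] | [e eo ->]].
  set q := 2 ^ a * o %/ m in q_odd.
  have nE : 2 ^ a * o = m * q by rewrite [m * _]mulnC divnK.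
  have : 2 ^ a %| m * q by rewrite -nE dvdn_mulr.
  rewrite Gauss_dvdl ?coprimeXl ?coprime2n // => /dvdnP[e mE].
  exists e; last by rewrite mE mulnC.
  apply/dvdnP; exists q; apply/eqP; rewrite -(eqn_pmul2l (expn_gt0 2 a)) nE mE.
  by rewrite mulnAC mulnC [e * q]mulnC.
have e0 : 0 < e := dvdn_gt0 o_gt0 eo.
rewrite muln_gt0 expn_gt0 e0 dvdn_pmul2l ?expn_gt0 // eo divnMl ?expn_gt0 //=.
by have := o_odd; rewrite -{1}(divnK eo) oddM => /andP[].
Qed.

Let n := 2 ^ a * o.

Let S := odd_cofactor_divisors n.

Lemma mem_odd_cofactor_divisors (m : 'I_n.+1) :
  reflect (exists2 e, e %| o & val m = 2 ^ a * e) (m \in S).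
Proof. by rewrite inE; apply: odd_cofactor_dvdP. Qed.

(* The map 2^a e |-> 2^a (o/e), defined without knowing e. *)
Definition codivisor_pair (m : 'I_n.+1) : 'I_n.+1 := inord (2 ^ a * n %/ m).

Lemma codivisor_pair_val (m : 'I_n.+1) e : e %| o -> val m = 2 ^ a * e ->
  val (codivisor_pair m) = 2 ^ a * (o %/ e).
Proof.
move=> eo mE; rewrite /codivisor_pair /= mE divnMl ?expn_gt0 // -muln_divA //.
by rewrite inordK // ltnS leq_mul2l leq_div orbT.
Qed.

Lemma codivisor_pair_fixed (m : 'I_n.+1) e : e %| o -> val m = 2 ^ a * e ->
  (codivisor_pair m == m) = (o == e * e).
Proof.
move=> eo mE; rewrite -val_eqE (codivisor_pair_val eo mE) mE eqn_pmul2l ?expn_gt0 //.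
by rewrite -{2}(divnK eo) eqn_pmul2r // (dvdn_gt0 o_gt0 eo).
Qed.

Lemma odd_card_odd_cofactor_divisors_square : odd #|S| <-> exists s, o = s * s.
Proof.
have pairS : {in S, forall m, codivisor_pair m \in S}.
  move=> m /mem_odd_cofactor_divisors[e eo mE]; apply/mem_odd_cofactor_divisors.
  by exists (o %/ e); [exact: dvdn_div | exact: codivisor_pair_val].
have pairK : {in S, cancel codivisor_pair codivisor_pair}.
  move=> m /mem_odd_cofactor_divisors[e eo mE]; apply: val_inj.
  rewrite (codivisor_pair_val (dvdn_div eo) (codivisor_pair_val eo mE)) mE.
  by rewrite divnA // mulKn.
rewrite (odd_card_involution pairS pairK); split.
  move/odd_gt0; rewrite card_gt0 => /set0Pn[m]; rewrite inE.
  case/andP=> /mem_odd_cofactor_divisors[e eo mE].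
  by rewrite (codivisor_pair_fixed eo mE) => /eqP ->; exists e.
case=> s oE; have s0 : 0 < s by move: o_gt0; rewrite oE muln_gt0 => /andP[].
have sE : val (inord (2 ^ a * s) : 'I_n.+1) = 2 ^ a * s.
  by rewrite /= inordK // ltnS leq_mul2l oE leq_pmulr ?orbT.
have so : s %| o by rewrite oE dvdn_mulr.
suff -> : [set m in S | codivisor_pair m == m] = [set inord (2 ^ a * s)].
  by rewrite cards1.
apply/setP => m; rewrite inE in_set1; apply/andP/eqP => [[] | ->].
  case/mem_odd_cofactor_divisors=> e eo mE; rewrite (codivisor_pair_fixed eo mE) oE.
  rewrite !mulnn eqn_exp2r // => /eqP se.
  by apply: val_inj; rewrite sE mE se.
split; first by apply/mem_odd_cofactor_divisors; exists s.
by rewrite (codivisor_pair_fixed so sE) oE.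
Qed.

End TwoAdic.

Lemma two_adic_decomposition n : 0 < n -> exists a o, odd o /\ n = 2 ^ a * o.
Proof.
move=> n0; have [o o_odd nE] := pfactor_coprime (isT : prime 2) n0.
by exists (logn 2 n), o; rewrite -coprime2n mulnC.
Qed.

Lemma odd_card_odd_cofactor_divisors n : 0 < n ->
  odd #|odd_cofactor_divisors n| <-> exists a s, odd s /\ n = 2 ^ a * (s * s).
Proof.
move=> n0; split.
  have [a [o [o_odd ->]]] := two_adic_decomposition n0.
  case/(odd_card_odd_cofactor_divisors_square a o_odd) => s oE.
  by exists a, s; move: o_odd; rewrite oE oddM andbb.
case=> a [s [s_odd ->]]; apply/odd_card_odd_cofactor_divisors_square.
  by rewrite oddM s_odd.
by exists s.
Qed.

Lemma square_or_twice_squareP n : 0 < n ->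
  (exists k, n = k ^ 2 \/ n = 2 * k ^ 2) <-> exists a s, odd s /\ n = 2 ^ a * (s * s).
Proof.
move=> n0; split => [[k kE] | [a [s [s_odd ->]]]].
  have k0 : 0 < k by case: k kE n0 => // -[] ->.
  have [b [s [s_odd kE']]] := two_adic_decomposition k0.
  have sqE : k ^ 2 = 2 ^ b.*2 * (s * s) by rewrite kE' expnMn -expnM muln2 mulnn.
  case: kE => ->; [exists b.*2 | exists b.*2.+1]; exists s; split => //.
  by rewrite sqE expnS mulnA.
exists (2 ^ a./2 * s); rewrite expnMn -expnM muln2 mulnn.
move: (odd_double_half a); set h := a./2; case: (odd a) => <-.
  by right; rewrite add1n expnS mulnA.
by left.
Qed.

Theorem theorem1p6 (n : nat) : 0 < n ->
  sptbarw n = sptbar n %[mod 2] /\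
  ((exists k : nat, n = k ^ 2 \/ n = 2 * k ^ 2) -> sptbar n = 1 %[mod 2]) /\
  (~ (exists k : nat, n = k ^ 2 \/ n = 2 * k ^ 2) -> sptbar n = 0 %[mod 2]).
Proof.
move=> n0; have oddE : odd #|odd_cofactor_divisors n| <->
    exists k : nat, n = k ^ 2 \/ n = 2 * k ^ 2.
  apply: iff_trans (odd_card_odd_cofactor_divisors n0) _.
  exact: iff_sym (square_or_twice_squareP n0).
split; first by rewrite sptbarw_eqmod2 sptbar_eqmod2.
rewrite sptbar_eqmod2 modn2; split => [/oddE -> // | not_sq].
by case: (boolP (odd _)) => // /oddE.
Qed.
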